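(* Let $n \geq 1$ be the number of training examples and let $\alpha_0, \beta_0 > 0$ be the parameters of a Beta prior $\textsc{Beta}(\alpha_0,\beta_0)$. Let $\widehat{P}_X \colon \mathbb{R}^d \to [0,1]$ be an estimator of the data density $\mathbb{P}(X=x)$ and $\widehat{P}_{Y|X} \colon \mathbb{R}^d \to [0,1]$ an estimator of the class-conditional probability $\mathbb{P}(Y=1\mid X=x)$, and define the expected anomaly posterior score $$\phi(x) = \frac{\alpha_0 + n\, \widehat{P}_X(x)\, \widehat{P}_{Y|X}(x)}{\alpha_0 + \beta_0 + n\, \widehat{P}_X(x)}.$$ Let $x_{\mathrm{r}}, x_{\mathrm{u}}, x_{\mathrm{i}} \in \mathbb{R}^d$ be, respectively, a realistic, an unrealistic, and an indistinguishable anomaly, and suppose the estimators satisfy the corresponding properties, namely $\widehat{P}_{Y|X}(x_{\mathrm{r}}) \in [0.5,1]$ and $\widehat{P}_X(x_{\mathrm{r}})>0$; $\widehat{P}_{Y|X}(x_{\mathrm{u}}) \in [0.5,1]$ and $\widehat{P}_X(x_{\mathrm{u}})=0$; $\widehat{P}_{Y|X}(x_{\mathrm{i}}) = 0$ and $\widehat{P}_X(x_{\mathrm{i}})>0$. Then $$\frac{\alpha_0}{\alpha_0+\beta_0} < 0.5 \implies \phi(x_{\mathrm{r}}) > \phi(x_{\mathrm{u}}) > \phi(x_{\mathrm{i}}).$$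
   Context: Setting: $X$ is a random feature vector in $\mathbb{R}^d$ and $Y\in\{0,1\}$ a label ($0$ normal, $1$ anomaly). An example $x$ is called a realistic anomaly if $\mathbb{P}(Y=1\mid X=x)\in[0.5,1]$ and $\mathbb{P}(X=x)>0$; an unrealistic anomaly if $\mathbb{P}(Y=1\mid X=x)\in[0.5,1]$ and $\mathbb{P}(X=x)=0$; an indistinguishable anomaly if $\mathbb{P}(Y=1\mid X=x)=0$ and $\mathbb{P}(X=x)>0$. The score $\phi(x)$ is the mean of the posterior $\textsc{Beta}(\alpha_0+\alpha_1,\beta_0+N-\alpha_1)$ of the anomaly probability $p_x$ with pseudo-counts $N = n\widehat{P}_X(x)$ and $\alpha_1 = n\widehat{P}_X(x)\widehat{P}_{Y|X}(x)$. *)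

From Stdlib Require Export Reals.
From Stdlib Require Fin.
Open Scope R_scope.

Definition Rd (d : nat) : Type := Fin.t d -> R.

(* Expected anomaly posterior score: mean of Beta(a0 + n PX PYX, b0 + n PX - n PX PYX). *)
Definition phi {d : nat} (n : nat) (alpha0 beta0 : R)
  (PX PYX : Rd d -> R) (x : Rd d) : R :=
  (alpha0 + INR n * PX x * PYX x) / (alpha0 + beta0 + INR n * PX x).

(* The score is a posterior mean: with [m = a0 / (a0 + b0)] the prior mean and
   [N = n PX x] the pseudo-count, phi x = m + N / (a0 + b0 + N) * (PYX x - m).
   So a point of zero estimated density scores exactly m, while a point of
   positive density is pulled from m towards PYX x: upwards for the realistic
   anomaly (PYX >= 1/2 > m), downwards for the indistinguishable one (PYX = 0 < m). *)
From Stdlib Require Import Reals Lra.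
Open Scope R_scope.

Lemma posterior_mean_sub_prior_mean (a b N p : R) :
  0 < a + b -> 0 < a + b + N ->
  (a + N * p) / (a + b + N) - a / (a + b) = N / (a + b + N) * (p - a / (a + b)).
Proof. intros Hs HsN. field; lra. Qed.

Lemma prior_mean_lt_posterior_mean (a b N p : R) :
  0 < a + b -> 0 < N -> a / (a + b) < p ->
  a / (a + b) < (a + N * p) / (a + b + N).
Proof.
  intros Hs HN Hp.
  assert (Hdiff := posterior_mean_sub_prior_mean a b N p Hs ltac:(lra)).
  assert (0 < N / (a + b + N) * (p - a / (a + b))).
  { apply Rmult_lt_0_compat; [apply Rdiv_lt_0_compat|]; lra. }
  lra.
Qed.

Lemma posterior_mean_lt_prior_mean (a b N p : R) :
  0 < a + b -> 0 < N -> p < a / (a + b) ->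
  (a + N * p) / (a + b + N) < a / (a + b).
Proof.
  intros Hs HN Hp.
  assert (Hdiff := posterior_mean_sub_prior_mean a b N p Hs ltac:(lra)).
  assert (0 < N / (a + b + N) * (a / (a + b) - p)).
  { apply Rmult_lt_0_compat; [apply Rdiv_lt_0_compat|]; lra. }
  lra.
Qed.

Lemma phi_zero_density {d : nat} (n : nat) (alpha0 beta0 : R)
  (PX PYX : Rd d -> R) (x : Rd d) :
  PX x = 0 -> phi n alpha0 beta0 PX PYX x = alpha0 / (alpha0 + beta0).
Proof.
  intros H0. unfold phi. rewrite H0, !Rmult_0_r, !Rmult_0_l, !Rplus_0_r.
  reflexivity.
Qed.

Lemma pseudo_count_pos (n : nat) (q : R) : (1 <= n)%nat -> 0 < q -> 0 < INR n * q.
Proof.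
  intros Hn Hq. apply Rmult_lt_0_compat; [|exact Hq].
  apply lt_0_INR. exact Hn.
Qed.

Theorem theorem1 (d n : nat) (alpha0 beta0 : R)
  (PX PYX : Rd d -> R) (xr xu xi : Rd d) :
  (1 <= n)%nat ->
  0 < alpha0 -> 0 < beta0 ->
  (forall x, 0 <= PX x <= 1) ->
  (forall x, 0 <= PYX x <= 1) ->
  ((1/2) <= PYX xr <= 1) -> 0 < PX xr ->
  ((1/2) <= PYX xu <= 1) -> PX xu = 0 ->
  PYX xi = 0 -> 0 < PX xi ->
  alpha0 / (alpha0 + beta0) < (1/2) ->
  phi n alpha0 beta0 PX PYX xr > phi n alpha0 beta0 PX PYX xu /\
  phi n alpha0 beta0 PX PYX xu > phi n alpha0 beta0 PX PYX xi.
Proof.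
  intros Hn Ha Hb _ _ [Hr _] Hpr _ Hpu Hyi Hpi Hm.
  rewrite (phi_zero_density n alpha0 beta0 PX PYX xu Hpu).
  assert (Hm_pos : 0 < alpha0 / (alpha0 + beta0)) by (apply Rdiv_lt_0_compat; lra).
  unfold phi; split.
  - apply prior_mean_lt_posterior_mean; [lra | apply pseudo_count_pos; assumption | lra].
  - rewrite Hyi.
    apply posterior_mean_lt_prior_mean; [lra | apply pseudo_count_pos; assumption | lra].
Qed.
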